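(* Let $\mathcal{C}=\{K_1,\dots,K_m\}$ be a covering of a finite set $E$. Let $A=\{A_1,\dots,A_s\}$ be the collection of all nonempty sets of the form $K_i-\bigcup_{j\neq i}K_j$ ($1\le i\le m$), and let $B=E-\bigcup_{i=1}^sA_i$. Then $\{A_1,\dots,A_s\}\cup\{\{x\}:x\in B\}$ is exactly the set of atoms of the lattice $\mathcal{L}(M(\mathcal{C}))$.
   Context: A covering of a finite set $E$ is a family of nonempty subsets of $E$ whose union is $E$. For a family $\mathcal{C}=\{K_1,\dots,K_m\}$ of subsets of $E$, a partial transversal is a set $\{e_1,\dots,e_k\}$ of distinct elements such that $e_j\in K_{i_j}$ for some distinct indices $i_1,\dots,i_k$; the transversal matroid $M(\mathcal{C})$ is the matroid on $E$ whose independent sets are the partial transversals of $\mathcal{C}$. For a matroid $M$ with rank function $r_M$, $cl_M(X)=\{a\in E:r_M(X\cup\{a\})=r_M(X)\}$; $X$ is closed if $cl_M(X)=X$. $\mathcal{L}(M)$ denotes the lattice of all closed sets of $M$ ordered by inclusion (meet is intersection, join is $cl_M$ of the union); its least element is $cl_M(\emptyset)$. An atom of a lattice with least element $0$ is an element covering $0$. *)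

(* The finite ground set E is modelled as a finType T
   (E = [set: T]); a family C = {K_1,...,K_m} is K : 'I_m -> {set T}. *)
From mathcomp Require Import all_boot.
Set Implicit Arguments. Unset Strict Implicit. Unset Printing Implicit Defensive.

Section Transversal.
Variables (T : finType) (m : nat) (K : 'I_m -> {set T}).

Definition covering : Prop :=
  (forall i, K i != set0) /\ \bigcup_(i < m) K i = [set: T].

Definition partial_transversal (X : {set T}) : bool :=
  [exists f : {ffun T -> 'I_m},
     [forall x in X, forall y in X, (f x == f y) ==> (x == y)] &&
     [forall e in X, e \in K (f e)]].

Definition tr_rank (X : {set T}) : nat :=
  \max_(Y in powerset X | partial_transversal Y) #|Y|.

Definition tr_cl (X : {set T}) : {set T} :=
  [set a | tr_rank (a |: X) == tr_rank X].

Definition tr_closed (X : {set T}) : Prop := tr_cl X = X.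

(* atoms of the lattice L(M(C)) of closed sets ordered by inclusion,
   whose least element is cl(emptyset) *)
Definition tr_atom (F : {set T}) : Prop :=
  tr_closed F /\ tr_cl set0 \proper F /\
  ~ (exists G, tr_closed G /\ tr_cl set0 \proper G /\ G \proper F).

Definition Aset : {set {set T}} :=
  [set K i :\: \bigcup_(j | j != i) K j | i : 'I_m] :\ set0.

Definition Bset : {set T} := ~: cover Aset.

End Transversal.

From mathcomp Require Import all_boot.
Set Implicit Arguments. Unset Strict Implicit. Unset Printing Implicit Defensive.

(* Write U_i = K_i - U_{j<>i} K_j. Since C covers E, every singleton is a
   partial transversal, so M(C) has no loops and cl(emptyset) is empty. Two
   distinct elements of a common U_i form a dependent pair, as both can only
   be matched to K_i; any other pair can be matched to two distinct members.
   Hence the parallel classes of M(C) are the nonempty U_i together with the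
   singletons of B, and in a loopless matroid the atoms of the lattice of
   flats are exactly the parallel classes. *)

Section TransversalAtoms.
Variables (T : finType) (m : nat) (K : 'I_m -> {set T}).

Definition private_part (i : 'I_m) : {set T} := K i :\: \bigcup_(j | j != i) K j.

Definition parallel_class (x : T) : {set T} :=
  [set y | (y == x) || [exists i, (x \in private_part i) && (y \in private_part i)]].

Lemma private_partP x i :
  reflect (x \in K i /\ forall j, x \in K j -> j = i) (x \in private_part i).
Proof.
rewrite inE; apply: (iffP andP) => [[nxU xi] | [xi xK]]; split=> //.
  move=> j xj; apply/eqP; apply: contraNT nxU => ji.
  by apply/bigcupP; exists j.
by apply/bigcupP => -[j ji /xK eji]; rewrite eji eqxx in ji.
Qed.

Lemma private_partE x i :
  (x \in private_part i) = (x \in K i) && ~~ [exists j, (j != i) && (x \in K j)].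
Proof.
rewrite inE andbC; congr (_ && ~~ _).
by apply/bigcupP/existsP => -[j]; [exists j; apply/andP | case/andP; exists j].
Qed.

Lemma mem_Aset (F : {set T}) :
  (F \in Aset K) = (F != set0) && [exists i, F == private_part i].
Proof.
rewrite !inE; congr andb.
by apply/imsetP/existsP => [[i _ ->] | [i /eqP->]]; exists i.
Qed.

Lemma mem_cover_Aset x : (x \in cover (Aset K)) = [exists i, x \in private_part i].
Proof.
apply/bigcupP/existsP => [[F] | [i xi]].
  by rewrite mem_Aset => /andP[_ /existsP[i /eqP->]]; exists i.
exists (private_part i) => //.
by rewrite mem_Aset; apply/andP; split; [apply/set0Pn; exists x | apply/existsP; exists i].
Qed.

Lemma parallel_class_id x : x \in parallel_class x.
Proof. by rewrite inE eqxx. Qed.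

Lemma parallel_class_private x i :
  x \in private_part i -> parallel_class x = private_part i.
Proof.
move=> xi; apply/setP => y; rewrite inE; apply/idP/idP => [|yi].
  case/orP => [/eqP->// | /existsP[j /andP[xj yj]]].
  by case/private_partP: xi => _ /(_ j); case/private_partP: xj => xKj _ <-.
by apply/orP; right; apply/existsP; exists i; rewrite xi yi.
Qed.

Lemma parallel_class_single x :
  ~~ [exists i, x \in private_part i] -> parallel_class x = [set x].
Proof.
move=> noU; apply/setP => y; rewrite !inE; case: eqP => //= _.
by apply: contraNF noU => /existsP[i /andP[xi _]]; apply/existsP; exists i.
Qed.

Lemma parallel_class_common x y z :
  y \in parallel_class x -> z \in parallel_class x -> y != z ->
  exists i, (y \in private_part i) && (z \in private_part i).
Proof.
case: (boolP [exists i, x \in private_part i]) => [/existsP[i xi] | noU].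
  by rewrite !(parallel_class_private xi) => yi zi _; exists i; rewrite yi zi.
by rewrite !(parallel_class_single noU) !inE => /eqP-> /eqP->; rewrite eqxx.
Qed.

Lemma partial_transversalP (Y : {set T}) :
  reflect (exists2 f : T -> 'I_m, {in Y &, injective f} & {in Y, forall e, e \in K (f e)})
          (partial_transversal K Y).
Proof.
apply: (iffP existsP) => [[f /andP[/forallP inj /forallP mem]] | [f injf memf]].
  exists f => [x y xY yY fxy | e eY]; last by move: (mem e); rewrite eY.
  by apply/eqP; move: (inj x); rewrite xY => /forallP/(_ y); rewrite yY fxy eqxx.
exists [ffun x => f x]; apply/andP; split; apply/forallP => x; apply/implyP => xY.
  apply/forallP => y; apply/implyP => yY; apply/implyP.
  by rewrite !ffunE => /eqP/injf->.
by rewrite ffunE memf.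
Qed.

Lemma partial_transversal1 x i : x \in K i -> partial_transversal K [set x].
Proof.
move=> xi; apply/partial_transversalP; exists (fun=> i) => [y z | y].
  by rewrite !inE => /eqP-> /eqP->.
by rewrite inE => /eqP->.
Qed.

Lemma partial_transversal2 a x i j :
  i != j -> a \in K i -> x \in K j -> partial_transversal K [set a; x].
Proof.
move=> nij ai xj; pose f y := if y == a then i else j.
apply/partial_transversalP; exists f => [y z | y]; rewrite /f.
  rewrite !inE => /orP[]/eqP-> /orP[]/eqP->; rewrite ?eqxx //;
    by case: eqP => // _ eij; rewrite eij eqxx in nij.
by rewrite !inE => /orP[]/eqP->; rewrite ?eqxx //; case: eqP => [->|].
Qed.

Lemma partial_transversal_exchange (Y : {set T}) a x :
  (forall j, a \in K j -> x \in K j) -> partial_transversal K Y ->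
  a \in Y -> x \notin Y -> partial_transversal K (x |: (Y :\ a)).
Proof.
move=> aKx /partial_transversalP[f injf memf] aY xY.
pose g y := if y == x then a else y.
have gY y : y \in x |: (Y :\ a) -> g y \in Y.
  by rewrite /g !inE; case: eqP => // _ /andP[].
have injg : {in x |: (Y :\ a) &, injective g}.
  move=> y z; rewrite /g !inE.
  case: (eqVneq y x) => [->|_]; case: (eqVneq z x) => [->|_] //=.
  - by move=> _ /andP[za _] az; rewrite az eqxx in za.
  - by move=> /andP[ya _] _ ya'; rewrite ya' eqxx in ya.
apply/partial_transversalP; exists (f \o g) => [y z yS zS /injf | y yS /=].
  by move=> /(_ (gY y yS) (gY z zS)) /injg; apply.
by have := memf _ (gY y yS); rewrite /g; case: eqP => [-> /aKx | //].
Qed.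

Lemma partial_transversal_private (Y : {set T}) i y z :
  partial_transversal K Y -> y \in Y -> z \in Y ->
  y \in private_part i -> z \in private_part i -> y = z.
Proof.
case/partial_transversalP => f injf memf yY zY.
move=> /private_partP[_ /(_ _ (memf y yY)) fy] /private_partP[_ /(_ _ (memf z zY)) fz].
by apply: injf; rewrite // fy fz.
Qed.

Lemma card_partial_transversal_parallel x (Y : {set T}) :
  partial_transversal K Y -> Y \subset parallel_class x -> #|Y| <= 1.
Proof.
move=> iY sYx; apply/card_le1_eqP => y z yY zY; case: (eqVneq y z) => // nyz.
have [i /andP[yi zi]] := parallel_class_common (subsetP sYx y yY) (subsetP sYx z zY) nyz.
exact/esym/(partial_transversal_private iY yY zY yi zi).
Qed.

Lemma tr_rank_leq_card (X : {set T}) : tr_rank K X <= #|X|.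
Proof. by apply/bigmax_leqP => Y; rewrite !inE => /andP[/subset_leq_card]. Qed.

Lemma card_leq_tr_rank (X Y : {set T}) :
  partial_transversal K Y -> Y \subset X -> #|Y| <= tr_rank K X.
Proof. by move=> iY sYX; apply: leq_bigmax_cond; rewrite !inE sYX. Qed.

Lemma tr_rank_subset (X Y : {set T}) : X \subset Y -> tr_rank K X <= tr_rank K Y.
Proof.
move=> sXY; apply/bigmax_leqP => Z; rewrite !inE => /andP[sZX iZ].
exact: card_leq_tr_rank iZ (subset_trans sZX sXY).
Qed.

Lemma tr_rank_parallel x (X : {set T}) :
  (forall y, partial_transversal K [set y]) ->
  X \subset parallel_class x -> X != set0 -> tr_rank K X = 1.
Proof.
move=> indep1 sXx /set0Pn[y yX]; apply/eqP; rewrite eqn_leq.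
apply/andP; split; last by rewrite -(cards1 y) card_leq_tr_rank // sub1set.
apply/bigmax_leqP => Y; rewrite !inE => /andP[sYX iY].
exact: card_partial_transversal_parallel iY (subset_trans sYX sXx).
Qed.

Hypothesis K_cover : covering K.

Lemma covering_mem x : exists i, x \in K i.
Proof.
have : x \in [set: T] by rewrite inE.
by rewrite -K_cover.2 => /bigcupP[i _ xi]; exists i.
Qed.

Lemma partial_transversal_set1 x : partial_transversal K [set x].
Proof. by have [i] := covering_mem x; apply: partial_transversal1. Qed.

Lemma tr_cl0 : tr_cl K set0 = set0.
Proof.
apply/setP => a; rewrite !inE setU0.
have -> : tr_rank K set0 = 0 by apply/eqP; rewrite -leqn0 -(cards0 T) tr_rank_leq_card.
apply/negbTE; rewrite -lt0n -(cards1 a).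
exact: card_leq_tr_rank (partial_transversal_set1 a) (subxx _).
Qed.

Lemma partial_transversal_nonparallel a x :
  a \notin parallel_class x -> partial_transversal K [set a; x].
Proof.
move=> nax; have [i ai] := covering_mem a.
have [/existsP[j /andP[ji xj]] | noxj] := boolP [exists j, (j != i) && (x \in K j)].
  by apply: partial_transversal2 ai xj; rewrite eq_sym.
have xi : x \in private_part i.
  have [j xj] := covering_mem x; rewrite private_partE noxj andbT.
  suff <- : j = i by [].
  by apply/eqP; apply: contraNT noxj => ji; apply/existsP; exists j; rewrite ji.
have [/existsP[j /andP[ji aj]] | noaj] := boolP [exists j, (j != i) && (a \in K j)].
  by apply: partial_transversal2 ji aj _; case/private_partP: xi.
by rewrite (parallel_class_private xi) private_partE ai noaj in nax.
Qed.

Lemma parallel_class_closed x : tr_cl K (parallel_class x) = parallel_class x.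
Proof.
have r1 : tr_rank K (parallel_class x) = 1.
  apply: tr_rank_parallel partial_transversal_set1 (subxx _) _.
  by apply/set0Pn; exists x; apply: parallel_class_id.
apply/setP => a; rewrite inE r1.
have [ax | nax] := boolP (a \in parallel_class x).
  by rewrite (setUidPr _) ?sub1set // r1.
have ax : a != x by apply: contraNneq nax => ->; apply: parallel_class_id.
have rk2 : 1 < tr_rank K (a |: parallel_class x).
  apply: leq_trans (card_leq_tr_rank (partial_transversal_nonparallel nax) _).
    by rewrite cards2 ax.
  by rewrite subUset !sub1set setU11 setU1r ?parallel_class_id.
by rewrite gtn_eqF.
Qed.

Lemma parallel_class_sub_cl (F : {set T}) x :
  x \in F -> parallel_class x \subset tr_cl K F.
Proof.
move=> xF; apply/subsetP => a ax; rewrite inE eqn_leq [_ <= tr_rank K (a |: F)]tr_rank_subset ?subsetUr // andbT.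
apply/bigmax_leqP => Y; rewrite !inE => /andP[sYaF iY].
have [sYF | nsYF] := boolP (Y \subset F); first exact: card_leq_tr_rank.
have [aY aF] : a \in Y /\ a \notin F.
  case/subsetPn: nsYF => y yY yF; move: (subsetP sYaF y yY).
  by rewrite !inE (negbTE yF) orbF => /eqP ya; rewrite -ya.
have [|i /andP[ai xi]] := parallel_class_common ax (parallel_class_id x).
  by apply: contraNneq aF => ->.
have xY : x \notin Y.
  apply/negP => xY; have ax' := partial_transversal_private iY aY xY ai xi.
  by rewrite ax' xF in aF.
have aKx j : a \in K j -> x \in K j.
  by case/private_partP: ai => _ /[apply] ->; case/private_partP: xi.
have -> : #|Y| = #|x |: (Y :\ a)|.
  by rewrite cardsU1 (cardsD1 a Y) aY !inE negb_and xY orbT.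
apply: card_leq_tr_rank (partial_transversal_exchange aKx iY aY xY) _.
rewrite subUset sub1set xF; apply/subsetP => y; rewrite !inE => /andP[ya yY].
by move: (subsetP sYaF y yY); rewrite !inE (negbTE ya).
Qed.

Lemma tr_atomE (F : {set T}) : tr_atom K F <-> exists x, F = parallel_class x.
Proof.
rewrite /tr_atom /tr_closed tr_cl0 !proper0; split.
  move=> [clF [/set0Pn[x xF] noG]]; exists x.
  have sxF : parallel_class x \subset F by rewrite -clF parallel_class_sub_cl.
  apply/eqP; rewrite eq_sym eqEproper sxF /=; apply/negP => pxF; apply: noG.
  exists (parallel_class x); split; first exact: parallel_class_closed.
  by split=> //; rewrite proper0; apply/set0Pn; exists x; apply: parallel_class_id.
move=> [x ->]; split; first exact: parallel_class_closed.
split; first by apply/set0Pn; exists x; apply: parallel_class_id.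
move=> [G [clG []]]; rewrite proper0 => nG pG; have sGx := proper_sub pG.
have : parallel_class x \subset G.
  apply/subsetP => a ax; rewrite -clG inE.
  have rk1 := tr_rank_parallel partial_transversal_set1 (x := x).
  rewrite !rk1 // ?subUset ?sub1set ?ax //.
  by apply/set0Pn; exists a; apply: setU11.
by move/(proper_sub_trans pG); rewrite properxx.
Qed.

End TransversalAtoms.

(* Injectivity of K is not needed: distinct indices have disjoint private
   parts, so the nonempty ones are distinct anyway. *)
Theorem theorem2 (T : finType) (m : nat) (K : 'I_m -> {set T}) :
  covering K -> injective K ->
  forall F : {set T},
    tr_atom K F <-> (F \in Aset K \/ exists2 x, x \in Bset K & F = [set x]).
Proof.
move=> K_cover _ F; apply: iff_trans (tr_atomE K_cover F) _; split.
  move=> [x ->]; have [/existsP[i xi] | noU] := boolP [exists i, x \in private_part K i].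
    left; rewrite (parallel_class_private xi) mem_Aset.
    by apply/andP; split; [apply/set0Pn; exists x | apply/existsP; exists i].
  by right; exists x; rewrite ?parallel_class_single // inE mem_cover_Aset.
case=> [| [x xB ->]].
  rewrite mem_Aset => /andP[/set0Pn[x xF] /existsP[i /eqP eF]].
  by exists x; rewrite eF (parallel_class_private (_ : x \in private_part K i)) // -eF.
by exists x; rewrite parallel_class_single //; move: xB; rewrite inE mem_cover_Aset.
Qed.
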